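(* Let $G_1=(V_1,E_1)$ and $G_2=(V_2,E_2)$ be connected graphs whose path metrics are conditionally strictly negative definite, and let $o\in V_2$. Then the path metric of the comb product $G_1\triangleright_o G_2$ is conditionally strictly negative definite.
   Context: The comb product $G_1\triangleright_o G_2$ is the graph obtained from $G_1$ by attaching to each vertex $v\in V_1$ its own copy of $G_2$, identifying the vertex $o$ of that copy with $v$ (copies attached at different vertices are disjoint otherwise). The path metric of a connected graph is the shortest-path distance on its vertex set. A symmetric real function $K$ on $V\times V$ is conditionally strictly negative definite if for every finitely supported $\lambda\colon V\to\mathbb{C}$, $\lambda\neq0$, with $\sum_v\lambda(v)=0$ one has $\sum_{x,y}\lambda(x)\overline{\lambda(y)}K(x,y)<0$. *)

From Stdlib Require Import Reals List ClassicalEpsilon.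
From Coquelicot Require Import Coquelicot.
Import ListNotations.
Open Scope R_scope.

Definition simple_graph {V : Type} (adj : V -> V -> Prop) : Prop :=
  (forall x y, adj x y -> adj y x) /\ (forall x, ~ adj x x).

Inductive walk {V : Type} (adj : V -> V -> Prop) : nat -> V -> V -> Prop :=
| walk_nil : forall x, walk adj 0 x x
| walk_cons : forall n x y z, walk adj n x y -> adj y z -> walk adj (S n) x z.

Definition connected {V : Type} (adj : V -> V -> Prop) : Prop :=
  forall x y : V, exists n, walk adj n x y.

(* Path metric: the length of a shortest walk (well defined for connected
   graphs; chosen classically). *)
Definition gdist {V : Type} (adj : V -> V -> Prop) (x y : V) : nat :=
  epsilon (inhabits 0%nat)
    (fun n => walk adj n x y /\ forall m, walk adj m x y -> (n <= m)%nat).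

Definition csum {A : Type} (f : A -> C) (s : list A) : C :=
  fold_right (fun a acc => Cplus (f a) acc) (RtoC 0) s.

Definition cond_strict_neg_def {V : Type} (K : V -> V -> R) : Prop :=
  forall (lam : V -> C) (s : list V),
    NoDup s ->
    (forall v, ~ In v s -> lam v = RtoC 0) ->
    (exists v, lam v <> RtoC 0) ->
    csum lam s = RtoC 0 ->
    let q := csum (fun x => csum (fun y =>
               Cmult (Cmult (lam x) (Cconj (lam y))) (RtoC (K x y))) s) s in
    Im q = 0 /\ Re q < 0.

Definition path_metric {V : Type} (adj : V -> V -> Prop) (x y : V) : R :=
  INR (gdist adj x y).

(* Comb product G1 |>_o G2: vertex (v, w) is the vertex w of the copy of G2
   attached at v; the vertex (v, o) is identified with v in V1. *)
Definition comb_adj {V1 V2 : Type} (adj1 : V1 -> V1 -> Prop)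
  (adj2 : V2 -> V2 -> Prop) (o : V2) (a b : V1 * V2) : Prop :=
  (fst a = fst b /\ adj2 (snd a) (snd b)) \/
  (snd a = o /\ snd b = o /\ adj1 (fst a) (fst b)).

(* In the comb, d((v,w),(v',w')) = d2(w,w') if v = v' and
   d2(w,o) + d1(v,v') + d2(o,w') otherwise.  For a mean-zero lam, let m v be
   the mass of the fibre over v, and recentre each fibre by moving its mass to
   o.  Up to separable kernels f x + g y, which are invisible to mean-zero
   functions, the quadratic form of the comb metric at lam is the form of d1
   at m plus the sum over v of the forms of d2 at the recentred fibres.  All
   these functions have mean zero, so every term is a nonpositive real; if
   m = 0 then some fibre is itself nonzero, so some term is negative. *)

From Stdlib Require Import Reals List ClassicalEpsilon Classical Permutation
  Lra Lia FunctionalExtensionality Wf_nat.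
From Coquelicot Require Import Coquelicot.
Open Scope C_scope.

Definition classic_eq_dec {T : Type} (x y : T) : {x = y} + {x <> y} :=
  excluded_middle_informative (x = y).

Lemma Cconj_RtoC (r : R) : Cconj r = r.
Proof. unfold Cconj, RtoC; simpl; f_equal; ring. Qed.

Section FiniteSums.

Context {A : Type}.
Implicit Types (f g : A -> C) (l : list A).

Lemma csum_app f l1 l2 : csum f (l1 ++ l2) = csum f l1 + csum f l2.
Proof. induction l1 as [|a l1 IH]; simpl; [ring | rewrite IH; ring]. Qed.

Lemma csum_ext f g l : (forall x, In x l -> f x = g x) -> csum f l = csum g l.
Proof.
  induction l as [|a l IH]; simpl; intros Hfg; [reflexivity|].
  rewrite Hfg, IH; auto.
Qed.

Lemma csum_0 l : csum (fun _ => 0) l = 0.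
Proof. induction l as [|a l IH]; simpl; [reflexivity | rewrite IH; ring]. Qed.

Lemma csum_plus f g l : csum (fun x => f x + g x) l = csum f l + csum g l.
Proof. induction l as [|a l IH]; simpl; [ring | rewrite IH; ring]. Qed.

Lemma csum_minus f g l : csum (fun x => f x - g x) l = csum f l - csum g l.
Proof. induction l as [|a l IH]; simpl; [ring | rewrite IH; ring]. Qed.

Lemma csum_mult_l c f l : csum (fun x => c * f x) l = c * csum f l.
Proof. induction l as [|a l IH]; simpl; [ring | rewrite IH; ring]. Qed.

Lemma csum_mult_r c f l : csum (fun x => f x * c) l = csum f l * c.
Proof. induction l as [|a l IH]; simpl; [ring | rewrite IH; ring]. Qed.

Lemma csum_conj f l : Cconj (csum f l) = csum (fun x => Cconj (f x)) l.
Proof.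
  induction l as [|a l IH]; simpl; [apply Cconj_RtoC|].
  rewrite Cplus_conj, IH; reflexivity.
Qed.

Lemma csum_perm f l l' : Permutation l l' -> csum f l = csum f l'.
Proof. induction 1; simpl; try congruence; ring. Qed.

Lemma csum_indicator f l x : NoDup l -> In x l ->
  csum (fun y => if classic_eq_dec x y then f y else 0) l = f x.
Proof.
  induction 1 as [|a l Ha Hl IH]; simpl; [tauto|].
  intros [E | Hx].
  - subst a. destruct (classic_eq_dec x x) as [_|]; [|congruence].
    rewrite (csum_ext _ (fun _ => 0)), csum_0; [ring|].
    intros y Hy; destruct (classic_eq_dec x y); congruence.
  - destruct (classic_eq_dec x a); [congruence|]. rewrite IH; auto; ring.
Qed.

Lemma csum_support f l l' : NoDup l -> NoDup l' ->
  (forall x, f x <> 0 -> In x l <-> In x l') -> csum f l = csum f l'.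
Proof.
  intros Hl Hl' Hsupp.
  set (nz := fun x => if classic_eq_dec (f x) 0 then false else true).
  assert (Hdrop : forall k, csum f k = csum f (filter nz k)).
  { induction k as [|a k IH]; simpl; [reflexivity|]. unfold nz at 1.
    destruct (classic_eq_dec (f a) 0) as [E|]; simpl; rewrite IH; [rewrite E; ring | reflexivity]. }
  rewrite (Hdrop l), (Hdrop l'). apply csum_perm, NoDup_Permutation; try apply NoDup_filter; auto.
  intros x. rewrite !filter_In. unfold nz.
  destruct (classic_eq_dec (f x) 0) as [_|Hx]; [intuition discriminate | specialize (Hsupp x Hx); tauto].
Qed.

Lemma csum_Im_0 f l : (forall x, In x l -> Im (f x) = 0%R) -> Im (csum f l) = 0%R.
Proof.
  induction l as [|a l IH]; simpl; intros H; [reflexivity|].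
  change (Im (f a) + Im (csum f l) = 0)%R.
  rewrite (H a (or_introl eq_refl)), IH; auto; ring.
Qed.

Lemma csum_Re_nonpos f l : (forall x, In x l -> (Re (f x) <= 0)%R) -> (Re (csum f l) <= 0)%R.
Proof.
  induction l as [|a l IH]; simpl; intros H; [lra|].
  change (Re (f a) + Re (csum f l) <= 0)%R.
  specialize (H a (or_introl eq_refl)) as Ha. assert (Re (csum f l) <= 0)%R by auto. lra.
Qed.

Lemma csum_Re_neg f l x0 : (forall x, In x l -> (Re (f x) <= 0)%R) -> In x0 l ->
  (Re (f x0) < 0)%R -> (Re (csum f l) < 0)%R.
Proof.
  intros Hle Hx0 Hlt. induction l as [|a l IH]; simpl in *; [tauto|].
  change (Re (f a) + Re (csum f l) < 0)%R.
  destruct Hx0 as [<- | Hx0].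
  - assert (Re (csum f l) <= 0)%R by (apply csum_Re_nonpos; auto). lra.
  - assert (Re (csum f l) < 0)%R by auto. specialize (Hle a (or_introl eq_refl)). lra.
Qed.

End FiniteSums.

Lemma csum_swap {A B : Type} (F : A -> B -> C) l1 l2 :
  csum (fun x => csum (fun y => F x y) l2) l1 = csum (fun y => csum (fun x => F x y) l1) l2.
Proof.
  induction l1 as [|a l1 IH]; simpl; [symmetry; apply csum_0|].
  rewrite IH, <- csum_plus; reflexivity.
Qed.

Lemma csum_mult_csum {A B : Type} (f : A -> C) (g : B -> C) l1 l2 :
  csum (fun x => csum (fun y => f x * g y) l2) l1 = csum f l1 * csum g l2.
Proof.
  rewrite <- csum_mult_r. apply csum_ext; intros x _. apply csum_mult_l.
Qed.

Lemma csum_list_prod {A B : Type} (F : A * B -> C) l1 l2 :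
  csum F (list_prod l1 l2) = csum (fun v => csum (fun w => F (v, w)) l2) l1.
Proof.
  induction l1 as [|a l1 IH]; simpl; [reflexivity|].
  rewrite csum_app, IH. f_equal. clear IH.
  induction l2 as [|b l2 IH]; simpl; congruence.
Qed.

Lemma NoDup_list_prod {A B : Type} (l1 : list A) (l2 : list B) :
  NoDup l1 -> NoDup l2 -> NoDup (list_prod l1 l2).
Proof.
  intros H1 H2. induction H1 as [|a l1 Ha _ IH]; simpl; [constructor|].
  apply NoDup_app; auto.
  - apply FinFun.Injective_map_NoDup; [intros x y E; congruence | exact H2].
  - intros [u w] Hm Hp. apply in_map_iff in Hm as [y [E _]]. injection E as -> _.
    apply in_prod_iff in Hp. tauto.
Qed.

Definition qform {A : Type} (K : A -> A -> R) (lam : A -> C) (s : list A) : C :=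
  csum (fun x => csum (fun y => lam x * Cconj (lam y) * K x y) s) s.

Section QuadraticForms.

Context {A : Type}.
Implicit Types (K : A -> A -> R) (lam mu : A -> C) (s : list A).

Lemma qform_ext K K' lam s : (forall x y, K x y = K' x y) -> qform K lam s = qform K' lam s.
Proof.
  intros HK. unfold qform. apply csum_ext; intros x _; apply csum_ext; intros y _.
  rewrite HK; reflexivity.
Qed.

Lemma qform_kernel_plus K K' lam s :
  qform (fun x y => (K x y + K' x y)%R) lam s = qform K lam s + qform K' lam s.
Proof.
  unfold qform. rewrite <- csum_plus. apply csum_ext; intros x _.
  rewrite <- csum_plus. apply csum_ext; intros y _. rewrite RtoC_plus; ring.
Qed.

Lemma qform_separable (f g : A -> R) lam s : csum lam s = 0 ->
  qform (fun x y => (f x + g y)%R) lam s = 0.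
Proof.
  intros Hsum. rewrite qform_kernel_plus. unfold qform.
  rewrite (csum_ext (fun x => csum (fun y => lam x * Cconj (lam y) * f x) s)
             (fun x => csum (fun y => (lam x * f x) * Cconj (lam y)) s)),
    (csum_ext (fun x => csum (fun y => lam x * Cconj (lam y) * g y) s)
             (fun x => csum (fun y => lam x * (Cconj (lam y) * g y)) s)).
  - rewrite !csum_mult_csum, <- csum_conj, Hsum, Cconj_RtoC; ring.
  - intros x _; apply csum_ext; intros y _; ring.
  - intros x _; apply csum_ext; intros y _; ring.
Qed.

Lemma qform_eq_off K lam mu s (o : A) :
  (forall y, K o y = 0%R) -> (forall x, K x o = 0%R) -> (forall x, x <> o -> mu x = lam x) ->
  qform K mu s = qform K lam s.
Proof.
  intros Hrow Hcol Hmu. unfold qform. apply csum_ext; intros x _; apply csum_ext; intros y _.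
  destruct (classic (x = o)) as [->|Hx]; [rewrite Hrow; ring|].
  destruct (classic (y = o)) as [->|Hy]; [rewrite Hcol; ring|].
  rewrite !Hmu; auto.
Qed.

Lemma qform_support K lam s s' : NoDup s -> NoDup s' ->
  (forall x, lam x <> 0 -> In x s <-> In x s') -> qform K lam s = qform K lam s'.
Proof.
  intros Hs Hs' Hsupp. unfold qform.
  rewrite (csum_ext _ (fun x => csum (fun y => lam x * Cconj (lam y) * K x y) s')).
  - apply csum_support; auto. intros x Hx. apply Hsupp. intros E. apply Hx.
    rewrite (csum_ext _ (fun _ => 0)); [apply csum_0|]. intros y _. rewrite E; ring.
  - intros x _. apply csum_support; auto. intros y Hy. apply Hsupp. intros E. apply Hy.
    rewrite E, Cconj_RtoC; ring.
Qed.

Lemma qform_nonpos K lam s : cond_strict_neg_def K -> NoDup s ->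
  (forall x, ~ In x s -> lam x = 0) -> csum lam s = 0 ->
  Im (qform K lam s) = 0%R /\ (Re (qform K lam s) <= 0)%R.
Proof.
  intros HK Hs Hsupp Hsum.
  destruct (classic (exists x, lam x <> 0)) as [Hnz|Hz].
  - destruct (HK lam s Hs Hsupp Hnz Hsum) as [HIm HRe]. split; [exact HIm | unfold qform; lra].
  - assert (E : qform K lam s = 0).
    { unfold qform. rewrite (csum_ext _ (fun _ => 0)); [apply csum_0|]. intros x _.
      rewrite (csum_ext _ (fun _ => 0)); [apply csum_0|]. intros y _.
      replace (lam x) with (RtoC 0) by (apply NNPP; intros Hx; apply Hz; eauto). ring. }
    rewrite E. simpl. lra.
Qed.

(* Vanishes on the row and column of [o]; the term [K o o] makes this hold for every [K]. *)
Definition based_kernel K (o x y : A) : R := (K x y - K x o - K o y + K o o)%R.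

Definition recenter (o : A) lam s : A -> C :=
  fun x => lam x - (if classic_eq_dec o x then csum lam s else 0).

Lemma csum_recenter (o : A) lam s : NoDup s -> In o s -> csum (recenter o lam s) s = 0.
Proof.
  intros Hs Ho. unfold recenter. rewrite csum_minus.
  rewrite (csum_indicator (fun _ => csum lam s)); auto. ring.
Qed.

(* [K] and [based_kernel K o] differ by a separable kernel, invisible to the
   mean-zero function [recenter o lam s], which differs from [lam] only at [o]. *)
Lemma qform_based_kernel K (o : A) lam s : NoDup s -> In o s ->
  qform (based_kernel K o) lam s = qform K (recenter o lam s) s.
Proof.
  intros Hs Ho.
  rewrite (qform_ext K (fun x y => (based_kernel K o x y + ((K x o - K o o) + K o y))%R)).
  2:{ intros x y; unfold based_kernel; ring. }
  rewrite qform_kernel_plus, qform_separable by (apply csum_recenter; auto).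
  rewrite Cplus_0_r. symmetry. apply (qform_eq_off _ _ _ _ o).
  - intros y; unfold based_kernel; ring.
  - intros x; unfold based_kernel; ring.
  - intros x Hx. unfold recenter. destruct (classic_eq_dec o x); [congruence | ring].
Qed.

End QuadraticForms.

Section ProductForms.

Context {A B : Type}.
Implicit Types (lam : A * B -> C).

Lemma qform_fst (K : A -> A -> R) lam (s1 : list A) (s2 : list B) :
  qform (fun a b => K (fst a) (fst b)) lam (list_prod s1 s2)
  = qform K (fun v => csum (fun w => lam (v, w)) s2) s1.
Proof.
  unfold qform. rewrite csum_list_prod. apply csum_ext; intros v _.
  rewrite csum_swap, csum_list_prod. apply csum_ext; intros v' _. simpl.
  rewrite csum_conj, <- csum_mult_csum, <- csum_mult_r, csum_swap.
  apply csum_ext; intros w _. rewrite <- csum_mult_r. reflexivity.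
Qed.

Lemma qform_fiberwise (K : B -> B -> R) lam (s1 : list A) (s2 : list B) : NoDup s1 ->
  qform (fun a b => if classic_eq_dec (fst a) (fst b) then K (snd a) (snd b) else 0%R)
    lam (list_prod s1 s2)
  = csum (fun v => qform K (fun w => lam (v, w)) s2) s1.
Proof.
  intros Hs1. unfold qform. rewrite csum_list_prod. apply csum_ext; intros v Hv.
  apply csum_ext; intros w _. rewrite csum_list_prod. simpl.
  rewrite <- (csum_indicator (fun v' => csum (fun w' => lam (v, w) * Cconj (lam (v', w'))
    * K w w') s2) s1 v) by auto.
  apply csum_ext; intros v' _. destruct (classic_eq_dec v v') as [<-|]; [reflexivity|].
  rewrite (csum_ext _ (fun _ => 0)); [apply csum_0|]. intros; ring.
Qed.

End ProductForms.

Definition comb_kernel {V1 V2 : Type} (K1 : V1 -> V1 -> R) (K2 : V2 -> V2 -> R) (o : V2)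
  (a b : V1 * V2) : R :=
  if classic_eq_dec (fst a) (fst b) then K2 (snd a) (snd b)
  else (K2 (snd a) o + K1 (fst a) (fst b) + K2 o (snd b))%R.

Section CombKernel.

Context {V1 V2 : Type} (K1 : V1 -> V1 -> R) (K2 : V2 -> V2 -> R) (o : V2).
Hypothesis K1_diag : forall v, K1 v v = 0%R.
Hypothesis K2_oo : K2 o o = 0%R.

Lemma qform_comb_kernel (lam : V1 * V2 -> C) s1 s2 :
  NoDup s1 -> NoDup s2 -> In o s2 -> csum lam (list_prod s1 s2) = 0 ->
  qform (comb_kernel K1 K2 o) lam (list_prod s1 s2)
  = csum (fun v => qform K2 (recenter o (fun w => lam (v, w)) s2) s2) s1
    + qform K1 (fun v => csum (fun w => lam (v, w)) s2) s1.
Proof.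
  intros Hs1 Hs2 Ho Hsum.
  rewrite (qform_ext _ (fun a b =>
    ((if classic_eq_dec (fst a) (fst b) then based_kernel K2 o (snd a) (snd b) else 0)
     + (K2 (snd a) o + K2 o (snd b)) + K1 (fst a) (fst b))%R)).
  2:{ intros [v w] [v' w']. unfold comb_kernel, based_kernel; simpl.
      destruct (classic_eq_dec v v') as [<-|]; [rewrite K1_diag, K2_oo|]; ring. }
  rewrite 2!qform_kernel_plus, qform_separable, qform_fiberwise, qform_fst by assumption.
  rewrite Cplus_0_r. f_equal. apply csum_ext; intros v _. apply qform_based_kernel; assumption.
Qed.

Lemma qform_comb_kernel_neg (lam : V1 * V2 -> C) s1 s2 :
  cond_strict_neg_def K1 -> cond_strict_neg_def K2 ->
  NoDup s1 -> NoDup s2 -> In o s2 ->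
  (forall v w, ~ (In v s1 /\ In w s2) -> lam (v, w) = 0) ->
  (exists a, lam a <> 0) -> csum lam (list_prod s1 s2) = 0 ->
  Im (qform (comb_kernel K1 K2 o) lam (list_prod s1 s2)) = 0%R /\
  (Re (qform (comb_kernel K1 K2 o) lam (list_prod s1 s2)) < 0)%R.
Proof.
  intros HK1 HK2 Hs1 Hs2 Ho Hsupp [[v0 w0] Hlam0] Hsum.
  rewrite qform_comb_kernel by assumption.
  set (m := fun v => csum (fun w => lam (v, w)) s2).
  set (mu := fun v => recenter o (fun w => lam (v, w)) s2).
  assert (Hm_supp : forall v, ~ In v s1 -> m v = 0).
  { intros v Hv. unfold m. rewrite (csum_ext _ (fun _ => 0)); [apply csum_0|].
    intros w _. apply Hsupp. tauto. }
  assert (Hm_sum : csum m s1 = 0) by (unfold m; rewrite <- csum_list_prod; exact Hsum).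
  assert (Hmu_supp : forall v w, ~ In w s2 -> mu v w = 0).
  { intros v w Hw. unfold mu, recenter. rewrite Hsupp by tauto.
    destruct (classic_eq_dec o w) as [<-|]; [contradiction | ring]. }
  assert (Hmu_sum : forall v, csum (mu v) s2 = 0) by (intros v; apply csum_recenter; assumption).
  assert (Hm : Im (qform K1 m s1) = 0%R /\ (Re (qform K1 m s1) <= 0)%R)
    by (apply qform_nonpos; assumption).
  assert (Hmu : forall v, Im (qform K2 (mu v) s2) = 0%R /\ (Re (qform K2 (mu v) s2) <= 0)%R)
    by (intros v; apply qform_nonpos; auto).
  split.
  - change (Im (csum (fun v => qform K2 (mu v) s2) s1) + Im (qform K1 m s1) = 0)%R.
    rewrite csum_Im_0 by (intros; apply Hmu). lra.
  - change (Re (csum (fun v => qform K2 (mu v) s2) s1) + Re (qform K1 m s1) < 0)%R.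
    destruct (classic (exists v, m v <> 0)) as [Hnz|Hz].
    + assert (Re (csum (fun v => qform K2 (mu v) s2) s1) <= 0)%R
        by (apply csum_Re_nonpos; intros; apply Hmu).
      assert (Re (qform K1 m s1) < 0)%R by apply (HK1 m s1 Hs1 Hm_supp Hnz Hm_sum).
      lra.
    + assert (Hv0 : In v0 s1) by (apply NNPP; intros H; apply Hlam0, Hsupp; tauto).
      assert (Hmu0 : mu v0 w0 <> 0).
      { unfold mu, recenter. fold (m v0).
        replace (m v0) with (RtoC 0) by (apply NNPP; intros H; apply Hz; eauto).
        destruct (classic_eq_dec o w0); intros E; apply Hlam0; rewrite <- E; ring. }
      assert (Re (csum (fun v => qform K2 (mu v) s2) s1) < 0)%R.
      { apply (csum_Re_neg _ _ v0); [intros; apply Hmu | exact Hv0|].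
        apply (HK2 (mu v0) s2 Hs2 (Hmu_supp v0) (ex_intro _ w0 Hmu0) (Hmu_sum v0)). }
      destruct Hm. lra.
Qed.

(* Any finite support can be enlarged to a product [s1 x s2] with [o] in [s2]. *)
Theorem comb_kernel_cond_strict_neg_def :
  cond_strict_neg_def K1 -> cond_strict_neg_def K2 -> cond_strict_neg_def (comb_kernel K1 K2 o).
Proof.
  intros HK1 HK2 lam s Hs Hsupp Hnz Hsum.
  set (s1 := nodup classic_eq_dec (map fst s)).
  set (s2 := nodup classic_eq_dec (o :: map snd s)).
  assert (Hs1 : NoDup s1) by apply NoDup_nodup.
  assert (Hs2 : NoDup s2) by apply NoDup_nodup.
  assert (Hsp : NoDup (list_prod s1 s2)) by (apply NoDup_list_prod; assumption).
  assert (Hincl : forall v w, In (v, w) s -> In v s1 /\ In w s2).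
  { intros v w H. split; apply nodup_In; [|right].
    - exact (in_map fst _ _ H).
    - exact (in_map snd _ _ H). }
  assert (Hsupp' : forall a, lam a <> 0 -> In a s <-> In a (list_prod s1 s2)).
  { intros [v w] Ha. rewrite in_prod_iff. split; [apply Hincl|].
    intros _. apply NNPP. intros Hn. apply Ha, Hsupp, Hn. }
  cbv zeta. fold (qform (comb_kernel K1 K2 o) lam s).
  rewrite (qform_support _ _ _ _ Hs Hsp Hsupp').
  rewrite (csum_support _ _ _ Hs Hsp Hsupp') in Hsum.
  apply qform_comb_kernel_neg; try assumption.
  - apply nodup_In; left; reflexivity.
  - intros v w Hvw. apply Hsupp. intros H. apply Hvw, Hincl, H.
Qed.

End CombKernel.

Section Walks.

Context {V : Type} (adj : V -> V -> Prop).

Lemma walk_app n k x y z : walk adj n x y -> walk adj k y z -> walk adj (n + k) x z.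
Proof.
  intros Hxy Hyz. induction Hyz as [|k y z w _ IH Hzw]; [rewrite Nat.add_0_r; exact Hxy|].
  rewrite Nat.add_succ_r. econstructor; eauto.
Qed.

Lemma gdist_spec x y : (exists n, walk adj n x y) ->
  walk adj (gdist adj x y) x y /\ forall m, walk adj m x y -> (gdist adj x y <= m)%nat.
Proof.
  intros Hxy. unfold gdist. apply epsilon_spec.
  destruct (dec_inh_nat_subset_has_unique_least_element (fun n => walk adj n x y)
    (fun n => classic _) Hxy) as [n [Hn _]].
  exists n. exact Hn.
Qed.

Lemma gdist_unique n x y : walk adj n x y ->
  (forall m, walk adj m x y -> (n <= m)%nat) -> gdist adj x y = n.
Proof.
  intros Hn Hmin. destruct (gdist_spec x y (ex_intro _ n Hn)) as [Hd Hdmin].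
  specialize (Hdmin n Hn). specialize (Hmin _ Hd). lia.
Qed.

Lemma gdist_refl x : gdist adj x x = 0%nat.
Proof. apply gdist_unique; [constructor | intros; lia]. Qed.

Lemma gdist_adj_le x y z : connected adj -> adj y z -> (gdist adj x z <= gdist adj x y + 1)%nat.
Proof.
  intros Hc Hyz. destruct (gdist_spec x y (Hc x y)) as [Hxy _].
  destruct (gdist_spec x z (Hc x z)) as [_ Hmin].
  rewrite Nat.add_1_r. apply Hmin. econstructor; eauto.
Qed.

End Walks.

Lemma walk_map {V W : Type} (adj : V -> V -> Prop) (adj' : W -> W -> Prop) (f : V -> W) n x y :
  (forall a b, adj a b -> adj' (f a) (f b)) -> walk adj n x y -> walk adj' n (f x) (f y).
Proof. intros Hf H. induction H; econstructor; eauto. Qed.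

Section CombDistance.

Context {V1 V2 : Type} (adj1 : V1 -> V1 -> Prop) (adj2 : V2 -> V2 -> Prop) (o : V2).
Hypothesis conn1 : connected adj1.
Hypothesis conn2 : connected adj2.

Definition comb_gdist (a b : V1 * V2) : nat :=
  if classic_eq_dec (fst a) (fst b) then gdist adj2 (snd a) (snd b)
  else (gdist adj2 (snd a) o + gdist adj1 (fst a) (fst b) + gdist adj2 o (snd b))%nat.

Lemma comb_gdist_le_walk n a b : walk (comb_adj adj1 adj2 o) n a b -> (comb_gdist a b <= n)%nat.
Proof.
  intros H. induction H as [a|n a [u x] [u' x'] _ IH Hadj].
  { unfold comb_gdist. destruct (classic_eq_dec (fst a) (fst a)); [|congruence].
    rewrite gdist_refl. lia. }
  destruct a as [v w]. unfold comb_gdist, comb_adj in *; simpl in *.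
  destruct Hadj as [[<- A2] | [-> [-> A1]]]; simpl in *.
  - pose proof (gdist_adj_le adj2 w x x' conn2 A2).
    pose proof (gdist_adj_le adj2 o x x' conn2 A2).
    destruct (classic_eq_dec v u); lia.
  - rewrite gdist_refl in *.
    pose proof (gdist_adj_le adj1 v u u' conn1 A1).
    destruct (classic_eq_dec v u) as [<-|], (classic_eq_dec v u') as [<-|];
      rewrite ?gdist_refl in *; lia.
Qed.

Lemma walk_comb_gdist a b : walk (comb_adj adj1 adj2 o) (comb_gdist a b) a b.
Proof.
  destruct a as [v w], b as [v' w']. unfold comb_gdist; simpl.
  assert (Hfibre : forall u y z n, walk adj2 n y z -> walk (comb_adj adj1 adj2 o) n (u, y) (u, z)).
  { intros u y z n. apply (walk_map adj2 _ (fun t => (u, t))). intros c d Hcd. left; simpl; auto. }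
  assert (Hbase : forall y z n, walk adj1 n y z -> walk (comb_adj adj1 adj2 o) n (y, o) (z, o)).
  { intros y z n. apply (walk_map adj1 _ (fun t => (t, o))). intros c d Hcd. right; simpl; auto. }
  destruct (classic_eq_dec v v') as [<-|].
  - apply Hfibre, gdist_spec, conn2.
  - apply walk_app with (v', o); [apply walk_app with (v, o)|];
      first [apply Hfibre, gdist_spec, conn2 | apply Hbase, gdist_spec, conn1].
Qed.

Lemma path_metric_comb :
  path_metric (comb_adj adj1 adj2 o) = comb_kernel (path_metric adj1) (path_metric adj2) o.
Proof.
  apply functional_extensionality; intros a; apply functional_extensionality; intros b.
  unfold path_metric. rewrite (gdist_unique _ (comb_gdist a b)).
  - unfold comb_gdist, comb_kernel. destruct (classic_eq_dec (fst a) (fst b));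
      [reflexivity | rewrite !plus_INR; reflexivity].
  - apply walk_comb_gdist.
  - intros m; apply comb_gdist_le_walk.
Qed.

End CombDistance.

Theorem mainTheorem8 (V1 V2 : Type) (adj1 : V1 -> V1 -> Prop)
  (adj2 : V2 -> V2 -> Prop) (o : V2) :
  simple_graph adj1 -> connected adj1 ->
  simple_graph adj2 -> connected adj2 ->
  cond_strict_neg_def (path_metric adj1) ->
  cond_strict_neg_def (path_metric adj2) ->
  cond_strict_neg_def (path_metric (comb_adj adj1 adj2 o)).
Proof.
  intros _ conn1 _ conn2 H1 H2.
  rewrite path_metric_comb by assumption.
  apply comb_kernel_cond_strict_neg_def; try assumption;
    [intros v|]; unfold path_metric; rewrite gdist_refl; reflexivity.
Qed.
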